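(* Let $p$ be a positive continuous even function on $(-1,1)$ such that no nontrivial solution $u$ of $u''+pu=0$ has more than one zero in $(-1,1)$, and let $F$ be the solution of $\mathcal{S}F=2p$ on $(-1,1)$ with $F(0)=0$, $F'(0)=1$, $F''(0)=0$. Let $\varphi:(-1,1)\to\mathbb{R}^n$ be a $C^3$ curve with $\varphi'(x)\neq 0$ for all $x$, normalized by $\varphi(0)=0$, $|\varphi'(0)|=1$ and $\langle\varphi'(0),\varphi''(0)\rangle=0$. If $S_1\varphi(x)\le 2p(x)$ for all $x\in(-1,1)$, then for all $x\in(-1,1)$: (a) $|\varphi'(x)|\le F'(x)$, and (b) $\dfrac{|\varphi'(x)|}{1+|\varphi(x)|^2}\le \dfrac{F'(x)}{1+F(x)^2}$.
   Context: For a real function $g$ with $g'\neq0$, the Schwarzian derivative is $\mathcal{S}g=(g''/g')'-\tfrac12(g''/g')^2$. Equivalently, $F(x)=\int_0^x u_0(t)^{-2}\,dt$, where $u_0$ is the solution of $u''+pu=0$ with $u_0(0)=1$, $u_0'(0)=0$; $u_0$ has no zeros on $(-1,1)$, and $F$ is odd, strictly increasing, with $F'>0$. For a $C^3$ curve $\varphi$ on an interval into $\mathbb{R}^n$ with $\varphi'\neq0$, the Ahlfors Schwarzian is $$S_1\varphi=\frac{\langle\varphi',\varphi'''\rangle}{|\varphi'|^2}-3\frac{\langle\varphi',\varphi''\rangle^2}{|\varphi'|^4}+\frac32\frac{|\varphi''|^2}{|\varphi'|^2},$$ where $\langle\cdot,\cdot\rangle$ is the Euclidean inner product and $|\cdot|$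 the Euclidean norm. *)

From Stdlib Require Import Reals.
Open Scope R_scope.

(* Points of R^n are represented as functions nat -> R; only the
   components 0..n-1 are meaningful. *)
Fixpoint dotn (n : nat) (u v : nat -> R) : R :=
  match n with
  | O => 0
  | S k => dotn k u v + u k * v k
  end.

Definition normn (n : nat) (u : nat -> R) : R := sqrt (dotn n u u).

Definition in_I (x : R) : Prop := -1 < x < 1.

Definition is_sol (p u u1 : R -> R) : Prop :=
  forall x, in_I x ->
    derivable_pt_lim u x (u1 x) /\ derivable_pt_lim u1 x (- (p x * u x)).

Definition disconjugate (p : R -> R) : Prop :=
  forall u u1, is_sol p u u1 ->
    (exists x, in_I x /\ u x <> 0) ->
    forall a b, in_I a -> in_I b -> u a = 0 -> u b = 0 -> a = b.

(* Schwarzian of g at x, given g1 = g', g2 = g'' (with g1 x <> 0):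
   S g (x) = (g''/g')'(x) - 1/2 (g''/g')(x)^2 equals s. *)
Definition schwarzian_is (g1 g2 : R -> R) (x s : R) : Prop :=
  exists d, derivable_pt_lim (fun t => g2 t / g1 t) x d /\
            s = d - / 2 * (g2 x / g1 x) ^ 2.

Definition ahlfors_S1 (n : nat) (v1 v2 v3 : nat -> R) : R :=
  dotn n v1 v3 / (normn n v1) ^ 2
  - 3 * (dotn n v1 v2) ^ 2 / (normn n v1) ^ 4
  + 3 / 2 * (normn n v2) ^ 2 / (normn n v1) ^ 2.

From Stdlib Require Import Reals Lra Lia Ranalysis5 Ratan.
Open Scope R_scope.

(* The Schwarzian equation S F = 2p says that u0 = F'^(-1/2) solves u'' + p u = 0 with
   u0(0) = 1, u0'(0) = 0; so does u0 F, with initial data (0, 1).  Let s be the Euclidean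
   arclength (s' = |phi'|) or the spherical one (s' = |phi'| / (1 + |phi|^2), s(0) = 0) of phi.
   Then w = s'^(-1/2) solves w'' + (S s / 2) w = 0, and in the spherical case v = w cos (s - th)
   solves v'' + (s'^2 + S s / 2) v = 0; by Cauchy-Schwarz both potentials are at most
   S1 phi / 2 <= p.  Sturm comparison from 0 gives u0 <= w, which is (a).  For (b) take
   th = atan F(x): the solution cos th u0 + sin th u0 F has the initial data of v, is positive
   on [0, x] and equals u0 sqrt (1 + F^2) at x.  It stays below v as long as s - th < pi/2,
   which therefore holds up to x since v vanishes at pi/2; so u0 sqrt (1 + F^2) <= v <= w at x,
   which is (b).  Negative x follow by the reflection x -> -x. *)

Lemma derivable_pt_lim_eq f x l l' :
  derivable_pt_lim f x l -> l = l' -> derivable_pt_lim f x l'.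
Proof. now intros H <-. Qed.

Lemma derivable_pt_lim_const_mult c f x l :
  derivable_pt_lim f x l -> derivable_pt_lim (fun t => c * f t) x (c * l).
Proof.
  intro H. eapply derivable_pt_lim_eq.
  - apply (derivable_pt_lim_mult (fun _ => c) f); [apply derivable_pt_lim_const | exact H].
  - ring.
Qed.

Lemma derivable_pt_lim_exp_comp f x l :
  derivable_pt_lim f x l -> derivable_pt_lim (fun t => exp (f t)) x (exp (f x) * l).
Proof. intro H. apply (derivable_pt_lim_comp f exp); [exact H | apply derivable_pt_lim_exp]. Qed.

Lemma derivable_pt_lim_ln_comp f x l :
  0 < f x -> derivable_pt_lim f x l -> derivable_pt_lim (fun t => ln (f t)) x (l / f x).
Proof.
  intros Hpos H. eapply derivable_pt_lim_eq.
  - apply (derivable_pt_lim_comp f ln); [exact H | now apply derivable_pt_lim_ln].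
  - field. lra.
Qed.

Lemma derivable_pt_lim_cos_comp f x l :
  derivable_pt_lim f x l -> derivable_pt_lim (fun t => cos (f t)) x (- sin (f x) * l).
Proof. intro H. apply (derivable_pt_lim_comp f cos); [exact H | apply derivable_pt_lim_cos]. Qed.

Lemma derivable_pt_lim_sin_comp f x l :
  derivable_pt_lim f x l -> derivable_pt_lim (fun t => sin (f t)) x (cos (f x) * l).
Proof. intro H. apply (derivable_pt_lim_comp f sin); [exact H | apply derivable_pt_lim_sin]. Qed.

Lemma derivable_pt_lim_reflect f x l :
  derivable_pt_lim f (- x) l -> derivable_pt_lim (fun t => f (- t)) x (- l).
Proof.
  intro H. eapply derivable_pt_lim_eq.
  - apply (derivable_pt_lim_comp (fun t => - t) f); [| exact H].
    apply (derivable_pt_lim_opp (fun t => t)), derivable_pt_lim_id.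
  - ring.
Qed.

Lemma le_of_deriv_nonneg f f' a b : a <= b ->
  (forall t, a <= t <= b -> derivable_pt_lim f t (f' t)) ->
  (forall t, a <= t <= b -> 0 <= f' t) -> f a <= f b.
Proof.
  intros Hab Hd Hpos. destruct (Req_dec a b) as [<- | Hne]; [lra |].
  destruct (MVT_cor2 f f' a b) as [c [Hc Hac]]; [lra | exact Hd |].
  assert (0 <= f' c) by (apply Hpos; lra). nra.
Qed.

Lemma pos_of_neq0_on_I f :
  (forall x, in_I x -> continuity_pt f x) -> (forall x, in_I x -> f x <> 0) ->
  0 < f 0 -> forall x, in_I x -> 0 < f x.
Proof.
  unfold in_I. intros Hc Hnz H0 x Hx.
  destruct (Rlt_le_dec 0 (f x)) as [| Hle]; [assumption | exfalso].
  assert (Hneg : f x < 0) by (destruct Hle; [assumption | now apply Hnz in Hx]).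
  destruct (Rtotal_order x 0) as [Hx0 | [-> | Hx0]]; [| lra |].
  - assert (Hcx : forall a, x <= a <= 0 -> continuity_pt f a) by (intros a Ha; apply Hc; lra).
    destruct (IVT_interv f x 0 Hcx Hx0 Hneg H0) as [z [Hz Hfz]].
    apply (Hnz z); [lra | assumption].
  - assert (Hcx : forall a, 0 <= a <= x -> continuity_pt (fun t => - f t) a)
      by (intros a Ha; apply continuity_pt_opp, Hc; lra).
    destruct (IVT_interv (fun t => - f t) 0 x Hcx Hx0 ltac:(lra) ltac:(lra)) as [z [Hz Hfz]].
    apply (Hnz z); lra.
Qed.

Lemma antiderivative_exists f a b : a <= b ->
  (forall t, a <= t <= b -> continuity_pt f t) ->
  exists h, h a = 0 /\ forall t, a <= t <= b -> derivable_pt_lim h t (f t).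
Proof.
  intros Hab Hf. set (P := primitive Hab (FTC_P1 Hab Hf)).
  exists (fun t => P t - P a). split; [ring |].
  intros t Ht. eapply derivable_pt_lim_eq.
  - apply derivable_pt_lim_minus; [apply (RiemannInt_P28 Hab Hf Ht) | apply derivable_pt_lim_const].
  - ring.
Qed.

Lemma exp_le_exp_iff a b : exp a <= exp b <-> a <= b.
Proof.
  split; intro H.
  - destruct (Rle_or_lt a b) as [| Hlt]; [assumption |].
    apply exp_increasing in Hlt. lra.
  - destruct H as [Hlt | ->]; [left; now apply exp_increasing | lra].
Qed.

Lemma sqrt_exp_ln x : 0 < x -> sqrt x = exp (ln x / 2).
Proof. intro Hx. rewrite <- Rpower_sqrt by assumption. unfold Rpower. f_equal. field. Qed.

Lemma ln_sqrt x : 0 < x -> ln (sqrt x) = ln x / 2.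
Proof. intro Hx. now rewrite sqrt_exp_ln, ln_exp. Qed.

Lemma div_exp_ln x y : 0 < x -> 0 < y -> x / y = exp (ln x - ln y).
Proof.
  intros Hx Hy. unfold Rminus. rewrite exp_plus, exp_Ropp, !exp_ln by assumption.
  reflexivity.
Qed.

Lemma cos_atan_add_mul_sin_atan a : cos (atan a) + a * sin (atan a) = sqrt (1 + a ^ 2).
Proof.
  rewrite cos_atan, sin_atan. unfold Rsqr. replace (a ^ 2) with (a * a) by ring.
  assert (Ha : 0 < 1 + a * a) by nra.
  pose proof (sqrt_lt_R0 _ Ha) as Hs. pose proof (sqrt_sqrt _ (Rlt_le _ _ Ha)) as Hss.
  set (s := sqrt (1 + a * a)) in *.
  transitivity ((1 + a * a) / s); [field | rewrite <- Hss; field]; lra.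
Qed.

Lemma dotn_sym n u v : dotn n u v = dotn n v u.
Proof. induction n as [| n IH]; simpl; [| rewrite IH]; ring. Qed.

Lemma dotn_lincomb_l n a b u v w :
  dotn n (fun i => a * u i + b * v i) w = a * dotn n u w + b * dotn n v w.
Proof. induction n as [| n IH]; simpl; [| rewrite IH]; ring. Qed.

Lemma dotn_opp_l n u v : dotn n (fun i => - u i) v = - dotn n u v.
Proof. induction n as [| n IH]; simpl; [| rewrite IH]; ring. Qed.

Lemma dotn_opp_opp n u v : dotn n (fun i => - u i) (fun i => - v i) = dotn n u v.
Proof. rewrite dotn_opp_l, dotn_sym, dotn_opp_l, dotn_sym. ring. Qed.

Lemma dotn_zero_l n u v : (forall i, (i < n)%nat -> u i = 0) -> dotn n u v = 0.
Proof.
  induction n as [| n IH]; intro Hu; simpl; [reflexivity |].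
  rewrite IH by (intros i Hi; apply Hu; lia). rewrite (Hu n) by lia. ring.
Qed.

Lemma dotn_ge0 n u : 0 <= dotn n u u.
Proof. induction n as [| n IH]; simpl; nra. Qed.

Lemma dotn_gt0 n u : (exists i, (i < n)%nat /\ u i <> 0) -> 0 < dotn n u u.
Proof.
  induction n as [| n IH]; intros [i [Hi Hu]]; [lia |]. simpl.
  pose proof (dotn_ge0 n u).
  destruct (Nat.eq_dec i n) as [-> | Hne].
  - assert (0 < u n * u n) by (apply Rsqr_pos_lt; assumption). lra.
  - assert (0 < dotn n u u) by (apply IH; exists i; split; [lia | assumption]). nra.
Qed.

Lemma dotn_cauchy_schwarz n u v : 0 < dotn n u u -> dotn n u v ^ 2 <= dotn n u u * dotn n v v.
Proof.
  intro Hu. set (t := dotn n u v / dotn n u u).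
  pose proof (dotn_ge0 n (fun i => 1 * v i + - t * u i)) as H.
  rewrite dotn_lincomb_l, (dotn_sym n v), (dotn_sym n u), !dotn_lincomb_l, (dotn_sym n v u) in H.
  assert (Ht : dotn n u v = t * dotn n u u) by (unfold t; field; lra).
  rewrite Ht in H |- *. nra.
Qed.

Lemma normn_sqr n u : normn n u ^ 2 = dotn n u u.
Proof. apply pow2_sqrt, dotn_ge0. Qed.

Lemma normn_opp n u : normn n (fun i => - u i) = normn n u.
Proof. unfold normn. now rewrite dotn_opp_opp. Qed.

Lemma derivable_pt_lim_dotn n (f g : R -> nat -> R) f' g' x :
  (forall i, (i < n)%nat -> derivable_pt_lim (fun t => f t i) x (f' i)) ->
  (forall i, (i < n)%nat -> derivable_pt_lim (fun t => g t i) x (g' i)) ->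
  derivable_pt_lim (fun t => dotn n (f t) (g t)) x (dotn n f' (g x) + dotn n (f x) g').
Proof.
  induction n as [| n IH]; intros Hf Hg; simpl.
  - eapply derivable_pt_lim_eq; [apply derivable_pt_lim_const | ring].
  - eapply derivable_pt_lim_eq.
    + apply derivable_pt_lim_plus.
      * apply IH; intros i Hi; [apply Hf | apply Hg]; lia.
      * apply (derivable_pt_lim_mult (fun t => f t n) (fun t => g t n)); [apply Hf | apply Hg]; lia.
    + ring.
Qed.

Lemma ahlfors_S1_dotn n v1 v2 v3 :
  ahlfors_S1 n v1 v2 v3 = dotn n v1 v3 / dotn n v1 v1
    - 3 * dotn n v1 v2 ^ 2 / dotn n v1 v1 ^ 2 + 3 / 2 * dotn n v2 v2 / dotn n v1 v1.
Proof.
  unfold ahlfors_S1. replace (normn n v1 ^ 4) with ((normn n v1 ^ 2) ^ 2) by ring.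
  now rewrite !normn_sqr.
Qed.

Definition sol_on (q : R -> R) (a b : R) (u u1 : R -> R) : Prop :=
  forall t, a <= t <= b ->
    derivable_pt_lim u t (u1 t) /\ derivable_pt_lim u1 t (- (q t * u t)).

Lemma is_sol_on p u u1 a b : is_sol p u u1 -> -1 < a -> b < 1 -> sol_on p a b u u1.
Proof. intros H Ha Hb t Ht. apply H. unfold in_I. lra. Qed.

Lemma is_sol_lincomb p u u1 v v1 a b : is_sol p u u1 -> is_sol p v v1 ->
  is_sol p (fun t => a * u t + b * v t) (fun t => a * u1 t + b * v1 t).
Proof.
  intros Hu Hv t Ht. destruct (Hu t Ht) as [Hu0 Hu1], (Hv t Ht) as [Hv0 Hv1].
  split; eapply derivable_pt_lim_eq;
    try (apply derivable_pt_lim_plus; apply derivable_pt_lim_const_mult; eassumption); ring.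
Qed.

Lemma sturm_comparison q p a b v v1 u u1 : a <= b ->
  sol_on q a b v v1 -> sol_on p a b u u1 ->
  (forall t, a <= t <= b -> q t <= p t /\ 0 <= v t /\ 0 < u t) ->
  v a = u a -> v1 a = u1 a -> u b <= v b.
Proof.
  intros Hab Hv Hu Hc Hva Hv1a.
  (* The Wronskian, which vanishes at a, has derivative (p - q) v u >= 0. *)
  assert (Hwr : forall t, a <= t <= b -> 0 <= v1 t * u t - u1 t * v t).
  { intros t Ht. replace 0 with (v1 a * u a - u1 a * v a) by (rewrite Hva, Hv1a; ring).
    apply (le_of_deriv_nonneg (fun s => v1 s * u s - u1 s * v s) (fun s => (p s - q s) * v s * u s));
      [lra | |].
    - intros s Hs. destruct (Hv s ltac:(lra)), (Hu s ltac:(lra)).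
      eapply derivable_pt_lim_eq;
        [apply derivable_pt_lim_minus; apply derivable_pt_lim_mult; eassumption | ring].
    - intros s Hs. destruct (Hc s ltac:(lra)) as (? & ? & ?).
      apply Rmult_le_pos; [apply Rmult_le_pos |]; lra. }
  assert (Hratio : v a / u a <= v b / u b).
  { apply (le_of_deriv_nonneg (fun s => v s / u s) (fun s => (v1 s * u s - u1 s * v s) / (u s)²));
      [assumption | |].
    - intros s Hs. destruct (Hv s Hs), (Hu s Hs), (Hc s Hs) as (? & ? & ?).
      apply derivable_pt_lim_div; [assumption .. | lra].
    - intros s Hs. destruct (Hc s Hs) as (? & ? & ?).
      apply Rmult_le_pos; [apply Hwr, Hs | left; apply Rinv_0_lt_compat, Rsqr_pos_lt; lra]. }
  destruct (Hc a ltac:(lra)) as (_ & _ & Hua), (Hc b ltac:(lra)) as (_ & _ & Hub).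
  rewrite Hva in Hratio. replace (u a / u a) with 1 in Hratio by (field; lra).
  assert (Hvb : v b = v b / u b * u b) by (field; lra). nra.
Qed.

Section Prufer.

Variables (E E1 E2 m h : R -> R) (th a b : R).
Hypothesis Hab : a <= b.
Hypothesis HE : forall t, a <= t <= b -> derivable_pt_lim E t (E1 t).
Hypothesis HE1 : forall t, a <= t <= b -> derivable_pt_lim E1 t (E2 t).
Hypothesis Hm : forall t, a <= t <= b -> derivable_pt_lim m t (-2 * E1 t * m t).
Hypothesis Hh : forall t, a <= t <= b -> derivable_pt_lim h t (m t).

Definition prufer t := exp (E t) * cos (h t - th).
Definition prufer' t := exp (E t) * (E1 t * cos (h t - th) - m t * sin (h t - th)).

Lemma prufer_sol : sol_on (fun t => m t ^ 2 - E1 t ^ 2 - E2 t) a b prufer prufer'.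
Proof.
  intros t Ht. unfold prufer, prufer'.
  assert (Hw : derivable_pt_lim (fun s => exp (E s)) t (exp (E t) * E1 t))
    by (apply derivable_pt_lim_exp_comp, HE, Ht).
  assert (Hh' : derivable_pt_lim (fun s => h s - th) t (m t - 0))
    by (apply derivable_pt_lim_minus; [apply Hh, Ht | apply derivable_pt_lim_const]).
  pose proof (derivable_pt_lim_cos_comp _ _ _ Hh') as Hcos.
  pose proof (derivable_pt_lim_sin_comp _ _ _ Hh') as Hsin.
  split; eapply derivable_pt_lim_eq.
  - apply derivable_pt_lim_mult; [exact Hw | exact Hcos].
  - cbv beta. ring.
  - apply derivable_pt_lim_mult; [exact Hw |].
    apply derivable_pt_lim_minus; apply derivable_pt_lim_mult;
      [apply HE1, Ht | exact Hcos | apply Hm, Ht | exact Hsin].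
  - cbv beta. ring.
Qed.

Hypothesis Hm_ge0 : forall t, a <= t <= b -> 0 <= m t.
Hypothesis Hh_a : h a = 0.
Hypothesis Hth : 0 <= th < PI / 2.
Variables (p u u1 : R -> R).
Hypothesis Hu : sol_on p a b u u1.
Hypothesis Hu_pos : forall t, a <= t <= b -> 0 < u t.
Hypothesis Hpot : forall t, a <= t <= b -> m t ^ 2 - E1 t ^ 2 - E2 t <= p t.
Hypothesis Hu_a : u a = prufer a.
Hypothesis Hu1_a : u1 a = prufer' a.

Let h_le s t : a <= s -> s <= t -> t <= b -> h s <= h t.
Proof.
  intros Has Hst Htb. apply (le_of_deriv_nonneg h m); [assumption | |];
    intros r Hr; [apply Hh | apply Hm_ge0]; lra.
Qed.

Let le_prufer t : a <= t <= b -> (forall s, a <= s <= t -> 0 <= cos (h s - th)) ->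
  u t <= prufer t.
Proof.
  intros Ht Hcos.
  apply (sturm_comparison (fun s => m s ^ 2 - E1 s ^ 2 - E2 s) p a t prufer prufer' u u1);
    [lra | intros s Hs; apply prufer_sol; lra | intros s Hs; apply Hu; lra | | easy | easy].
  intros s Hs. split; [| split].
  - apply Hpot. lra.
  - apply Rmult_le_pos; [left; apply exp_pos | apply Hcos, Hs].
  - apply Hu_pos. lra.
Qed.

(* Since u stays positive, the angle h - th cannot reach pi/2, where the Prufer solution vanishes. *)
Let angle_lt t : a <= t <= b -> h t < th + PI / 2.
Proof.
  intro Ht. pose proof PI_RGT_0.
  destruct (Rlt_le_dec (h t) (th + PI / 2)) as [| Hge]; [assumption | exfalso].
  assert (Hcross : exists t1, a <= t1 <= t /\ h t1 = th + PI / 2).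
  { destruct Hge as [Hgt | Heq]; [| exists t; split; [lra | now symmetry]].
    assert (Hat : a < t) by (destruct (Req_dec a t) as [<- |]; [rewrite Hh_a in Hgt |]; lra).
    assert (Hc : forall s, a <= s <= t -> continuity_pt (fun r => h r - (th + PI / 2)) s).
    { intros s Hs. apply derivable_continuous_pt. exists (m s - 0).
      apply derivable_pt_lim_minus; [apply Hh; lra | apply derivable_pt_lim_const]. }
    destruct (IVT_interv _ a t Hc Hat ltac:(lra) ltac:(lra)) as [t1 [Ht1 Eh]].
    exists t1. split; [assumption | lra]. }
  destruct Hcross as [t1 [Ht1 Eh]].
  assert (Hle : u t1 <= prufer t1).
  { apply le_prufer; [lra |]. intros s Hs. apply cos_ge_0.
    - pose proof (h_le a s ltac:(lra) ltac:(lra) ltac:(lra)). lra.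
    - pose proof (h_le s t1 ltac:(lra) ltac:(lra) ltac:(lra)). lra. }
  unfold prufer in Hle. rewrite Eh in Hle.
  replace (th + PI / 2 - th) with (PI / 2) in Hle by ring. rewrite cos_PI2, Rmult_0_r in Hle.
  pose proof (Hu_pos t1 ltac:(lra)). lra.
Qed.

Lemma prufer_comparison : u b <= exp (E b).
Proof.
  assert (Hub : u b <= prufer b).
  { apply le_prufer; [lra |]. intros t Ht. apply cos_ge_0.
    - pose proof (h_le a t ltac:(lra) ltac:(lra) ltac:(lra)). lra.
    - pose proof (angle_lt t Ht). lra. }
  unfold prufer in Hub. pose proof (COS_bound (h b - th)). pose proof (exp_pos (E b)). nra.
Qed.

End Prufer.

(* With v1, v2, v3 the first three derivatives of a curve at a point y, exp euc_E = |v1|^(-1/2),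
   and euc_E1, euc_E2 are the first two derivatives of euc_E along the curve; likewise
   exp sph_E = sigma^(-1/2) for the spherical speed sigma = |v1| / (1 + |y|^2). *)
Definition euc_E n v1 := - ln (dotn n v1 v1) / 4.
Definition euc_E1 n v1 v2 := - dotn n v1 v2 / (2 * dotn n v1 v1).
Definition euc_E2 n v1 v2 v3 :=
  - ((dotn n v2 v2 + dotn n v1 v3) * dotn n v1 v1 - 2 * dotn n v1 v2 ^ 2) / (2 * dotn n v1 v1 ^ 2).

Definition sph_E n y v1 := ln (1 + dotn n y y) / 2 + euc_E n v1.
Definition sph_E1 n y v1 v2 := dotn n y v1 / (1 + dotn n y y) + euc_E1 n v1 v2.
Definition sph_E2 n y v1 v2 v3 :=
  ((dotn n v1 v1 + dotn n y v2) * (1 + dotn n y y) - 2 * dotn n y v1 ^ 2) / (1 + dotn n y y) ^ 2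
  + euc_E2 n v1 v2 v3.

Lemma euc_potential_le_ahlfors_S1 n v1 v2 v3 : 0 < dotn n v1 v1 ->
  - euc_E1 n v1 v2 ^ 2 - euc_E2 n v1 v2 v3 <= ahlfors_S1 n v1 v2 v3 / 2.
Proof.
  intro HA. pose proof (dotn_cauchy_schwarz n v1 v2 HA) as HCS.
  enough (Heq : ahlfors_S1 n v1 v2 v3 / 2 - (- euc_E1 n v1 v2 ^ 2 - euc_E2 n v1 v2 v3)
                = (dotn n v1 v1 * dotn n v2 v2 - dotn n v1 v2 ^ 2) / (4 * dotn n v1 v1 ^ 2)).
  { assert (0 <= (dotn n v1 v1 * dotn n v2 v2 - dotn n v1 v2 ^ 2) / (4 * dotn n v1 v1 ^ 2))
      by (apply Rmult_le_pos; [lra | left; apply Rinv_0_lt_compat; nra]).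
    lra. }
  rewrite ahlfors_S1_dotn. unfold euc_E1, euc_E2. field. lra.
Qed.

(* The gap is the Cauchy-Schwarz defect of v1 and v2 + k y, for k = 2 |v1|^2 / (1 + |y|^2). *)
Lemma sph_potential_le_ahlfors_S1 n y v1 v2 v3 : 0 < dotn n v1 v1 ->
  dotn n v1 v1 / (1 + dotn n y y) ^ 2 - sph_E1 n y v1 v2 ^ 2 - sph_E2 n y v1 v2 v3
    <= ahlfors_S1 n v1 v2 v3 / 2.
Proof.
  intro HA. pose proof (dotn_ge0 n y) as HB.
  set (k := 2 * dotn n v1 v1 / (1 + dotn n y y)).
  pose proof (dotn_cauchy_schwarz n v1 (fun i => 1 * v2 i + k * y i) HA) as HCS.
  assert (H1 : dotn n v1 (fun i => 1 * v2 i + k * y i) = dotn n v1 v2 + k * dotn n y v1).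
  { rewrite dotn_sym, dotn_lincomb_l, (dotn_sym n v2). ring. }
  assert (H2 : dotn n (fun i => 1 * v2 i + k * y i) (fun i => 1 * v2 i + k * y i)
               = dotn n v2 v2 + 2 * k * dotn n y v2 + k ^ 2 * dotn n y y).
  { rewrite dotn_lincomb_l, (dotn_sym n v2), (dotn_sym n y), !dotn_lincomb_l, (dotn_sym n v2 y).
    ring. }
  rewrite H1, H2 in HCS.
  enough (Heq : ahlfors_S1 n v1 v2 v3 / 2
      - (dotn n v1 v1 / (1 + dotn n y y) ^ 2 - sph_E1 n y v1 v2 ^ 2 - sph_E2 n y v1 v2 v3)
    = (dotn n v1 v1 * (dotn n v2 v2 + 2 * k * dotn n y v2 + k ^ 2 * dotn n y y)
       - (dotn n v1 v2 + k * dotn n y v1) ^ 2) / (4 * dotn n v1 v1 ^ 2)).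
  { assert (0 <= (dotn n v1 v1 * (dotn n v2 v2 + 2 * k * dotn n y v2 + k ^ 2 * dotn n y y)
                  - (dotn n v1 v2 + k * dotn n y v1) ^ 2) / (4 * dotn n v1 v1 ^ 2))
      by (apply Rmult_le_pos; [lra | left; apply Rinv_0_lt_compat; nra]).
    lra. }
  rewrite ahlfors_S1_dotn. unfold sph_E1, sph_E2, euc_E1, euc_E2, k. field. lra.
Qed.

Lemma exp_sph_E_sqr n y v1 : 0 < dotn n v1 v1 ->
  exp (-2 * sph_E n y v1) ^ 2 = dotn n v1 v1 / (1 + dotn n y y) ^ 2.
Proof.
  intro HA. pose proof (dotn_ge0 n y). unfold sph_E, euc_E.
  replace (-2 * (ln (1 + dotn n y y) / 2 + - ln (dotn n v1 v1) / 4))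
    with (ln (sqrt (dotn n v1 v1)) - ln (1 + dotn n y y)) by (rewrite ln_sqrt by lra; field).
  rewrite <- div_exp_ln by (try apply sqrt_lt_R0; lra).
  unfold Rdiv. rewrite Rpow_mult_distr, pow2_sqrt, pow_inv by lra. reflexivity.
Qed.

Lemma sqrt_le_of_exp_ln_le a A : 0 < a -> 0 < A ->
  exp (- ln a / 2) <= exp (- ln A / 4) -> sqrt A <= a.
Proof.
  intros Ha HA H. rewrite exp_le_exp_iff in H.
  rewrite sqrt_exp_ln, <- (exp_ln a) by assumption. apply exp_le_exp_iff. lra.
Qed.

Lemma sqrt_div_le_of_exp_ln_le a f A B : 0 < a -> 0 < A -> 0 <= B ->
  exp (- ln a / 2) * sqrt (1 + f ^ 2) <= exp (ln (1 + B) / 2 + - ln A / 4) ->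
  sqrt A / (1 + B) <= a / (1 + f ^ 2).
Proof.
  intros Ha HA HB H. assert (Hf : 0 < 1 + f ^ 2) by nra.
  rewrite (sqrt_exp_ln (1 + f ^ 2)), <- exp_plus, exp_le_exp_iff in H by assumption.
  rewrite !div_exp_ln, exp_le_exp_iff, ln_sqrt by (try apply sqrt_lt_R0; lra). lra.
Qed.

Set Implicit Arguments.

Record schwarz_data (p F F1 F2 : R -> R) : Prop := {
  sd_F1 : forall x, in_I x -> derivable_pt_lim F x (F1 x);
  sd_F2 : forall x, in_I x -> derivable_pt_lim F1 x (F2 x);
  sd_F1_neq0 : forall x, in_I x -> F1 x <> 0;
  sd_schwarzian : forall x, in_I x -> schwarzian_is F1 F2 x (2 * p x);
  sd_F_0 : F 0 = 0;
  sd_F1_0 : F1 0 = 1;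
  sd_F2_0 : F2 0 = 0 }.

Record curve_data (p : R -> R) (n : nat) (phi phi1 phi2 phi3 : R -> nat -> R) : Prop := {
  cd_phi1 : forall i, (i < n)%nat -> forall x, in_I x ->
    derivable_pt_lim (fun t => phi t i) x (phi1 x i);
  cd_phi2 : forall i, (i < n)%nat -> forall x, in_I x ->
    derivable_pt_lim (fun t => phi1 t i) x (phi2 x i);
  cd_phi3 : forall i, (i < n)%nat -> forall x, in_I x ->
    derivable_pt_lim (fun t => phi2 t i) x (phi3 x i);
  cd_phi1_neq0 : forall x, in_I x -> exists i, (i < n)%nat /\ phi1 x i <> 0;
  cd_phi_0 : forall i, (i < n)%nat -> phi 0 i = 0;
  cd_phi1_0 : normn n (phi1 0) = 1;
  cd_phi12_0 : dotn n (phi1 0) (phi2 0) = 0;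
  cd_S1 : forall x, in_I x -> ahlfors_S1 n (phi1 x) (phi2 x) (phi3 x) <= 2 * p x }.

Unset Implicit Arguments.

Section Comparison.

Variables (p F F1 F2 : R -> R) (n : nat) (phi phi1 phi2 phi3 : R -> nat -> R).
Hypothesis HF : schwarz_data p F F1 F2.
Hypothesis HC : curve_data p n phi phi1 phi2 phi3.

Lemma F1_gt0 t : in_I t -> 0 < F1 t.
Proof.
  apply pos_of_neq0_on_I; [| exact (sd_F1_neq0 HF) | rewrite (sd_F1_0 HF); lra].
  intros s Hs. apply derivable_continuous_pt. exists (F2 s). now apply (sd_F2 HF).
Qed.

Lemma F_ge0 t : 0 <= t < 1 -> 0 <= F t.
Proof.
  intro Ht. rewrite <- (sd_F_0 HF). apply (le_of_deriv_nonneg F F1); [lra | |];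
    intros s Hs; [apply (sd_F1 HF) | left; apply F1_gt0]; unfold in_I; lra.
Qed.

(* F' = u0^(-2): the Schwarzian equation for F is the Riccati form of u0'' + p u0 = 0. *)
Definition u0 t := exp (- ln (F1 t) / 2).
Definition u0' t := - (u0 t * (F2 t / F1 t)) / 2.

Lemma u0_sol : is_sol p u0 u0'.
Proof.
  intros t Ht. pose proof (F1_gt0 t Ht).
  assert (Hu0 : derivable_pt_lim u0 t (u0' t)).
  { eapply derivable_pt_lim_eq.
    - apply derivable_pt_lim_exp_comp.
      apply (derivable_pt_lim_div (fun s => - ln (F1 s)) (fun _ => 2));
        [| apply derivable_pt_lim_const | lra].
      apply derivable_pt_lim_opp, derivable_pt_lim_ln_comp; [assumption | apply (sd_F2 HF), Ht].
    - unfold u0', u0, Rsqr. field. lra. }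
  split; [exact Hu0 |].
  destruct (sd_schwarzian HF Ht) as [d [Hd Hp]].
  eapply derivable_pt_lim_eq.
  - apply (derivable_pt_lim_div (fun s => - (u0 s * (F2 s / F1 s))) (fun _ => 2));
      [| apply derivable_pt_lim_const | lra].
    apply derivable_pt_lim_opp, derivable_pt_lim_mult; [exact Hu0 | exact Hd].
  - replace (p t) with ((d - / 2 * (F2 t / F1 t) ^ 2) / 2) by lra.
    unfold u0', Rsqr. field. lra.
Qed.

Lemma u0_mul_F_sol : is_sol p (fun t => u0 t * F t) (fun t => u0' t * F t + u0 t * F1 t).
Proof.
  intros t Ht. destruct (u0_sol t Ht) as [Hu Hu']. pose proof (F1_gt0 t Ht).
  split.
  - apply derivable_pt_lim_mult; [exact Hu | apply (sd_F1 HF), Ht].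
  - eapply derivable_pt_lim_eq.
    + apply derivable_pt_lim_plus; apply derivable_pt_lim_mult;
        [exact Hu' | apply (sd_F1 HF), Ht | exact Hu | apply (sd_F2 HF), Ht].
    + unfold u0'. field. lra.
Qed.

Lemma u0_0 : u0 0 = 1.
Proof. unfold u0. rewrite (sd_F1_0 HF), ln_1. replace (- 0 / 2) with 0 by field. apply exp_0. Qed.

Lemma u0'_0 : u0' 0 = 0.
Proof. unfold u0'. rewrite (sd_F2_0 HF), (sd_F1_0 HF). field. Qed.

Lemma speed_sqr_gt0 t : in_I t -> 0 < dotn n (phi1 t) (phi1 t).
Proof. intro Ht. now apply dotn_gt0, (cd_phi1_neq0 HC). Qed.

Let deriv_dotn (f g f' g' : R -> nat -> R) t :
  (forall i, (i < n)%nat -> forall s, in_I s -> derivable_pt_lim (fun r => f r i) s (f' s i)) ->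
  (forall i, (i < n)%nat -> forall s, in_I s -> derivable_pt_lim (fun r => g r i) s (g' s i)) ->
  in_I t ->
  derivable_pt_lim (fun s => dotn n (f s) (g s)) t (dotn n (f' t) (g t) + dotn n (f t) (g' t)).
Proof. intros Hf Hg Ht. apply derivable_pt_lim_dotn; intros i Hi; [apply Hf | apply Hg]; assumption. Qed.

Lemma euc_E_deriv t : in_I t ->
  derivable_pt_lim (fun s => euc_E n (phi1 s)) t (euc_E1 n (phi1 t) (phi2 t)).
Proof.
  intro Ht. pose proof (speed_sqr_gt0 t Ht).
  eapply derivable_pt_lim_eq.
  - apply (derivable_pt_lim_div (fun s => - ln (dotn n (phi1 s) (phi1 s))) (fun _ => 4));
      [| apply derivable_pt_lim_const | lra].
    apply derivable_pt_lim_opp, derivable_pt_lim_ln_comp; [assumption |].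
    apply deriv_dotn; [exact (cd_phi2 HC) .. | exact Ht].
  - unfold euc_E1, Rsqr. rewrite (dotn_sym n (phi2 t)). field. lra.
Qed.

Lemma euc_E1_deriv t : in_I t ->
  derivable_pt_lim (fun s => euc_E1 n (phi1 s) (phi2 s)) t (euc_E2 n (phi1 t) (phi2 t) (phi3 t)).
Proof.
  intro Ht. pose proof (speed_sqr_gt0 t Ht).
  eapply derivable_pt_lim_eq.
  - apply (derivable_pt_lim_div (fun s => - dotn n (phi1 s) (phi2 s))
                                (fun s => 2 * dotn n (phi1 s) (phi1 s))); [| | lra].
    + apply derivable_pt_lim_opp, deriv_dotn; [exact (cd_phi2 HC) | exact (cd_phi3 HC) | exact Ht].
    + apply derivable_pt_lim_const_mult, deriv_dotn; [exact (cd_phi2 HC) .. | exact Ht].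
  - unfold euc_E2, Rsqr. rewrite (dotn_sym n (phi2 t) (phi1 t)). field. lra.
Qed.

Lemma sph_E_deriv t : in_I t ->
  derivable_pt_lim (fun s => sph_E n (phi s) (phi1 s)) t (sph_E1 n (phi t) (phi1 t) (phi2 t)).
Proof.
  intro Ht. pose proof (dotn_ge0 n (phi t)).
  eapply derivable_pt_lim_eq.
  - apply derivable_pt_lim_plus; [| apply euc_E_deriv, Ht].
    apply (derivable_pt_lim_div (fun s => ln (1 + dotn n (phi s) (phi s))) (fun _ => 2));
      [| apply derivable_pt_lim_const | lra].
    apply derivable_pt_lim_ln_comp; [lra |].
    apply derivable_pt_lim_plus; [apply derivable_pt_lim_const |].
    apply deriv_dotn; [exact (cd_phi1 HC) .. | exact Ht].
  - unfold sph_E1, Rsqr. rewrite (dotn_sym n (phi1 t) (phi t)). field. lra.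
Qed.

Lemma sph_E1_deriv t : in_I t ->
  derivable_pt_lim (fun s => sph_E1 n (phi s) (phi1 s) (phi2 s)) t
    (sph_E2 n (phi t) (phi1 t) (phi2 t) (phi3 t)).
Proof.
  intro Ht. pose proof (dotn_ge0 n (phi t)).
  eapply derivable_pt_lim_eq.
  - apply derivable_pt_lim_plus; [| apply euc_E1_deriv, Ht].
    apply (derivable_pt_lim_div (fun s => dotn n (phi s) (phi1 s))
                                (fun s => 1 + dotn n (phi s) (phi s))); [| | lra].
    + apply deriv_dotn; [exact (cd_phi1 HC) | exact (cd_phi2 HC) | exact Ht].
    + apply derivable_pt_lim_plus; [apply derivable_pt_lim_const |].
      apply deriv_dotn; [exact (cd_phi1 HC) .. | exact Ht].
  - unfold sph_E2, Rsqr. rewrite (dotn_sym n (phi1 t) (phi t)). field. lra.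
Qed.

Lemma speed_sqr_0 : dotn n (phi1 0) (phi1 0) = 1.
Proof. rewrite <- normn_sqr, (cd_phi1_0 HC). ring. Qed.

Lemma euc_E_0 : euc_E n (phi1 0) = 0.
Proof. unfold euc_E. rewrite speed_sqr_0, ln_1. field. Qed.

Lemma euc_E1_0 : euc_E1 n (phi1 0) (phi2 0) = 0.
Proof. unfold euc_E1. rewrite speed_sqr_0, (cd_phi12_0 HC). field. Qed.

Lemma sph_E_0 : sph_E n (phi 0) (phi1 0) = 0.
Proof.
  unfold sph_E. rewrite euc_E_0, (dotn_zero_l n (phi 0)) by exact (cd_phi_0 HC).
  rewrite !Rplus_0_r, ln_1. field.
Qed.

Lemma sph_E1_0 : sph_E1 n (phi 0) (phi1 0) (phi2 0) = 0.
Proof.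
  unfold sph_E1. rewrite euc_E1_0, (dotn_zero_l n (phi 0)) by exact (cd_phi_0 HC).
  unfold Rdiv. ring.
Qed.

Lemma euc_potential_le t : in_I t ->
  - euc_E1 n (phi1 t) (phi2 t) ^ 2 - euc_E2 n (phi1 t) (phi2 t) (phi3 t) <= p t.
Proof.
  intro Ht. pose proof (euc_potential_le_ahlfors_S1 n (phi1 t) (phi2 t) (phi3 t) (speed_sqr_gt0 t Ht)).
  pose proof (cd_S1 HC Ht). lra.
Qed.

Lemma sph_potential_le t : in_I t ->
  exp (-2 * sph_E n (phi t) (phi1 t)) ^ 2
    - sph_E1 n (phi t) (phi1 t) (phi2 t) ^ 2 - sph_E2 n (phi t) (phi1 t) (phi2 t) (phi3 t) <= p t.
Proof.
  intro Ht. pose proof (speed_sqr_gt0 t Ht) as HA.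
  rewrite exp_sph_E_sqr by exact HA.
  pose proof (sph_potential_le_ahlfors_S1 n (phi t) (phi1 t) (phi2 t) (phi3 t) HA).
  pose proof (cd_S1 HC Ht). lra.
Qed.

Section Bound.

Variable x : R.
Hypothesis Hx : 0 <= x < 1.

Let in_I_of_le t : 0 <= t <= x -> in_I t.
Proof. unfold in_I. lra. Qed.

Lemma euclidean_bound : normn n (phi1 x) <= F1 x.
Proof.
  assert (Hcmp : u0 x <= exp (euc_E n (phi1 x))).
  { apply (prufer_comparison (fun t => euc_E n (phi1 t)) (fun t => euc_E1 n (phi1 t) (phi2 t))
             (fun t => euc_E2 n (phi1 t) (phi2 t) (phi3 t)) (fun _ => 0) (fun _ => 0) 0 0 x)
      with (p := p) (u1 := u0').
    - lra.
    - intros t Ht. apply euc_E_deriv, in_I_of_le, Ht.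
    - intros t Ht. apply euc_E1_deriv, in_I_of_le, Ht.
    - intros t Ht. eapply derivable_pt_lim_eq; [apply derivable_pt_lim_const | ring].
    - intros t Ht. apply derivable_pt_lim_const.
    - intros t Ht. lra.
    - reflexivity.
    - pose proof PI_RGT_0. lra.
    - apply is_sol_on; [exact u0_sol | lra | lra].
    - intros t Ht. apply exp_pos.
    - intros t Ht. pose proof (euc_potential_le t (in_I_of_le t Ht)). lra.
    - unfold prufer. rewrite u0_0, euc_E_0, exp_0, Rminus_0_r, cos_0. ring.
    - unfold prufer'. rewrite u0'_0, euc_E1_0. ring. }
  apply sqrt_le_of_exp_ln_le; [apply F1_gt0, in_I_of_le; lra | apply speed_sqr_gt0, in_I_of_le; lra |].
  exact Hcmp.
Qed.

Lemma spherical_bound : normn n (phi1 x) / (1 + normn n (phi x) ^ 2) <= F1 x / (1 + F x ^ 2).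
Proof.
  set (th := atan (F x)).
  set (E := fun t => sph_E n (phi t) (phi1 t)).
  set (m := fun t => exp (-2 * E t)).
  assert (Hm : forall t, 0 <= t <= x ->
               derivable_pt_lim m t (-2 * sph_E1 n (phi t) (phi1 t) (phi2 t) * m t)).
  { intros t Ht. eapply derivable_pt_lim_eq.
    - apply derivable_pt_lim_exp_comp, derivable_pt_lim_const_mult, sph_E_deriv, in_I_of_le, Ht.
    - unfold m. ring. }
  destruct (antiderivative_exists m 0 x) as [h [Hh0 Hh]]; [lra | |].
  { intros t Ht. apply derivable_continuous_pt. eexists. apply Hm, Ht. }
  assert (Hth : 0 <= th < PI / 2).
  { unfold th. pose proof (atan_bound (F x)). split; [| lra].
    rewrite <- atan_0. destruct (F_ge0 x Hx) as [HFx | <-]; [left; now apply atan_increasing | lra]. }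
  assert (Hcos : 0 < cos th) by (apply cos_gt_0; pose proof PI_RGT_0; lra).
  assert (Hsin : 0 <= sin th) by (apply sin_ge_0; pose proof PI_RGT_0; lra).
  set (u := fun t => cos th * u0 t + sin th * (u0 t * F t)).
  set (u1 := fun t => cos th * u0' t + sin th * (u0' t * F t + u0 t * F1 t)).
  assert (Hcmp : u x <= exp (E x)).
  { apply (prufer_comparison E (fun t => sph_E1 n (phi t) (phi1 t) (phi2 t))
             (fun t => sph_E2 n (phi t) (phi1 t) (phi2 t) (phi3 t)) m h th 0 x)
      with (p := p) (u1 := u1).
    - lra.
    - intros t Ht. apply sph_E_deriv, in_I_of_le, Ht.
    - intros t Ht. apply sph_E1_deriv, in_I_of_le, Ht.
    - exact Hm.
    - exact Hh.
    - intros t Ht. left. apply exp_pos.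
    - exact Hh0.
    - exact Hth.
    - apply is_sol_on; [| lra | lra].
      apply is_sol_lincomb; [exact u0_sol | exact u0_mul_F_sol].
    - intros t Ht. unfold u. pose proof (F_ge0 t ltac:(lra)). pose proof (exp_pos (- ln (F1 t) / 2)).
      assert (0 <= sin th * (u0 t * F t)) by (apply Rmult_le_pos, Rmult_le_pos; unfold u0; lra).
      assert (0 < cos th * u0 t) by (apply Rmult_lt_0_compat; assumption).
      lra.
    - intros t Ht. apply sph_potential_le, in_I_of_le, Ht.
    - unfold u, prufer, E. rewrite u0_0, sph_E_0, (sd_F_0 HF), Hh0, exp_0, Rminus_0_l, cos_neg. ring.
    - unfold u1, prufer', m, E.
      rewrite u0_0, u0'_0, sph_E_0, sph_E1_0, (sd_F_0 HF), (sd_F1_0 HF), Hh0, Rminus_0_l,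
        cos_neg, sin_neg.
      replace (-2 * 0) with 0 by ring. rewrite exp_0. ring. }
  assert (Hux : u x = u0 x * sqrt (1 + F x ^ 2)).
  { unfold u, th. rewrite <- cos_atan_add_mul_sin_atan. ring. }
  rewrite Hux in Hcmp. unfold normn at 1. rewrite normn_sqr.
  apply sqrt_div_le_of_exp_ln_le;
    [apply F1_gt0, in_I_of_le; lra | apply speed_sqr_gt0, in_I_of_le; lra | apply dotn_ge0 |].
  exact Hcmp.
Qed.

End Bound.

Lemma bounds_nonneg x : 0 <= x < 1 ->
  normn n (phi1 x) <= F1 x /\
  normn n (phi1 x) / (1 + normn n (phi x) ^ 2) <= F1 x / (1 + F x ^ 2).
Proof. intro Hx. split; [apply euclidean_bound | apply spherical_bound]; exact Hx. Qed.

End Comparison.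

Lemma in_I_opp x : in_I x -> in_I (- x).
Proof. unfold in_I. lra. Qed.

Lemma schwarz_data_reflect p F F1 F2 : schwarz_data p F F1 F2 ->
  schwarz_data (fun t => p (- t)) (fun t => - F (- t)) (fun t => F1 (- t)) (fun t => - F2 (- t)).
Proof.
  intros [HF1 HF2 HF1nz HS HF0 HF10 HF20]. constructor; cbv beta.
  - intros y Hy. eapply derivable_pt_lim_eq.
    + apply derivable_pt_lim_opp, (derivable_pt_lim_reflect F), HF1, in_I_opp, Hy.
    + ring.
  - intros y Hy. eapply derivable_pt_lim_eq.
    + apply (derivable_pt_lim_reflect F1), HF2, in_I_opp, Hy.
    + ring.
  - intros y Hy. apply HF1nz, in_I_opp, Hy.
  - intros y Hy. destruct (HS (- y) (in_I_opp y Hy)) as [d [Hd Hs]]. exists d. split.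
    + apply (derivable_pt_lim_ext (fun t => - (F2 (- t) / F1 (- t)))).
      * intro t. unfold Rdiv. ring.
      * eapply derivable_pt_lim_eq.
        -- apply derivable_pt_lim_opp, (derivable_pt_lim_reflect (fun s => F2 s / F1 s)), Hd.
        -- ring.
    + rewrite Hs. unfold Rdiv. ring.
  - rewrite Ropp_0, HF0. ring.
  - now rewrite Ropp_0.
  - rewrite Ropp_0, HF20. ring.
Qed.

Lemma curve_data_reflect p n phi phi1 phi2 phi3 : curve_data p n phi phi1 phi2 phi3 ->
  curve_data (fun t => p (- t)) n (fun t => phi (- t)) (fun t i => - phi1 (- t) i)
    (fun t => phi2 (- t)) (fun t i => - phi3 (- t) i).
Proof.
  intros [H1 H2 H3 Hnz H0 H10 H120 HS]. constructor; cbv beta.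
  - intros i Hi y Hy. apply (derivable_pt_lim_reflect (fun t => phi t i)).
    apply H1; [assumption | now apply in_I_opp].
  - intros i Hi y Hy. eapply derivable_pt_lim_eq.
    + apply derivable_pt_lim_opp, (derivable_pt_lim_reflect (fun t => phi1 t i)).
      apply H2; [assumption | now apply in_I_opp].
    + ring.
  - intros i Hi y Hy. apply (derivable_pt_lim_reflect (fun t => phi2 t i)).
    apply H3; [assumption | now apply in_I_opp].
  - intros y Hy. destruct (Hnz (- y) (in_I_opp y Hy)) as [i [Hi Hne]].
    exists i. split; [assumption | lra].
  - intros i Hi. rewrite Ropp_0. now apply H0.
  - now rewrite Ropp_0, normn_opp.
  - rewrite Ropp_0, dotn_opp_l, H120. ring.
  - intros y Hy. unfold ahlfors_S1. rewrite dotn_opp_opp, dotn_opp_l, !normn_opp.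
    replace ((- dotn n (phi1 (- y)) (phi2 (- y))) ^ 2) with (dotn n (phi1 (- y)) (phi2 (- y)) ^ 2)
      by ring.
    exact (HS (- y) (in_I_opp y Hy)).
Qed.

Theorem theorem1
  (p : R -> R)
  (hp_pos : forall x, in_I x -> 0 < p x)
  (hp_cont : forall x, in_I x -> continuity_pt p x)
  (hp_even : forall x, in_I x -> p (- x) = p x)
  (hp_disc : disconjugate p)
  (F F1 F2 : R -> R)
  (hF1 : forall x, in_I x -> derivable_pt_lim F x (F1 x))
  (hF2 : forall x, in_I x -> derivable_pt_lim F1 x (F2 x))
  (hF1nz : forall x, in_I x -> F1 x <> 0)
  (hFS : forall x, in_I x -> schwarzian_is F1 F2 x (2 * p x))
  (hF0 : F 0 = 0) (hF10 : F1 0 = 1) (hF20 : F2 0 = 0)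
  (n : nat) (phi phi1 phi2 phi3 : R -> nat -> R)
  (hphi1 : forall i, (i < n)%nat -> forall x, in_I x ->
     derivable_pt_lim (fun t => phi t i) x (phi1 x i))
  (hphi2 : forall i, (i < n)%nat -> forall x, in_I x ->
     derivable_pt_lim (fun t => phi1 t i) x (phi2 x i))
  (hphi3 : forall i, (i < n)%nat -> forall x, in_I x ->
     derivable_pt_lim (fun t => phi2 t i) x (phi3 x i))
  (hphi3c : forall i, (i < n)%nat -> forall x, in_I x ->
     continuity_pt (fun t => phi3 t i) x)
  (hphi1nz : forall x, in_I x -> exists i, (i < n)%nat /\ phi1 x i <> 0)
  (hphi0 : forall i, (i < n)%nat -> phi 0 i = 0)
  (hphi10 : normn n (phi1 0) = 1)
  (hphi120 : dotn n (phi1 0) (phi2 0) = 0)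
  (hS1 : forall x, in_I x ->
     ahlfors_S1 n (phi1 x) (phi2 x) (phi3 x) <= 2 * p x) :
  forall x, in_I x ->
    normn n (phi1 x) <= F1 x /\
    normn n (phi1 x) / (1 + normn n (phi x) ^ 2) <= F1 x / (1 + F x ^ 2).
Proof.
  intros x Hx.
  assert (HF : schwarz_data p F F1 F2) by (constructor; assumption).
  assert (HC : curve_data p n phi phi1 phi2 phi3) by (constructor; assumption).
  destruct (Rle_lt_dec 0 x) as [Hpos | Hneg].
  - apply (bounds_nonneg p F F1 F2 n phi phi1 phi2 phi3 HF HC). unfold in_I in Hx. lra.
  - assert (Hx' : 0 <= - x < 1) by (unfold in_I in Hx; lra).
    pose proof (bounds_nonneg _ _ _ _ n _ _ _ _ (schwarz_data_reflect p F F1 F2 HF)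
                  (curve_data_reflect p n phi phi1 phi2 phi3 HC) (- x) Hx') as H.
    cbv beta in H. rewrite Ropp_involutive, normn_opp in H.
    replace ((- F x) ^ 2) with (F x ^ 2) in H by ring. exact H.
Qed.
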